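(* For any integer $t\ge 2$ and any non-singleton lattices $L_1,\dots,L_t$ of finite breadth, $$\operatorname{br}(L_1\times\dots\times L_t)=\operatorname{br}(L_1)+\dots+\operatorname{br}(L_t).$$
   Context: The breadth $\operatorname{br}(L)$ of a lattice $L$ is the least positive integer $n$ such that every join $\bigvee_{i=1}^m x_i$ with $x_i\in L$ and $m\ge n$ equals the join of some $n$ of the joinands $x_i$. *)

From HB Require Import structures.
From mathcomp Require Import all_boot all_order.
Set Implicit Arguments. Unset Strict Implicit. Unset Printing Implicit Defensive.
Import Order.TTheory.
Local Open Scope order_scope.

(* Join of a finite nonempty list of elements w.r.t. a binary join [jn];
   [None] for the empty list (the join of zero elements is not considered). *)
Definition ojoin {T : Type} (jn : T -> T -> T) (s : seq T) : option T :=
  match s with [::] => None | y :: s' => Some (foldl jn y s') end.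

Definition famjoin {T : Type} (jn : T -> T -> T) (m : nat) (x : 'I_m -> T) : option T :=
  ojoin jn (map x (enum 'I_m)).

Definition breadth_le {T : Type} (jn : T -> T -> T) (n : nat) : Prop :=
  forall (m : nat) (x : 'I_m -> T), (n <= m)%N ->
    exists f : 'I_n -> 'I_m, injective f /\ famjoin jn (x \o f) = famjoin jn x.

Definition is_breadth {T : Type} (jn : T -> T -> T) (n : nat) : Prop :=
  (0 < n)%N /\ breadth_le jn n /\
  forall k : nat, (0 < k)%N -> breadth_le jn k -> (n <= k)%N.

Definition prod_join {t : nat} {d : 'I_t -> Order.disp_t}
  (L : forall i, latticeType (d i)) (x y : forall i, L i) : forall i, L i :=
  fun i => Order.join (x i) (y i).

(* Upper bound: among m >= b_1 + ... + b_t joinands in the product, each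
   factor i has a set S_i of at most b_i indices whose joinands already have
   the full join in coordinate i; any b_1 + ... + b_t indices containing all
   the S_i give the full join in every coordinate.
   Lower bound: a lattice of breadth n (nontrivial if n = 1) has elements
   a_j, r_j (j < n) with a_j' <= r_j exactly when j' <> j, and a common lower
   bound c of the r_j.  In the product take the elements equal to a_{i,j} in
   coordinate i and to c elsewhere: leaving out the one indexed by (i, j)
   keeps coordinate i of the join below r_{i,j}, whereas the full join is
   not below r_{i,j}, so no smaller subfamily has the same join. *)

From HB Require Import structures.
From mathcomp Require Import all_boot all_order.
From Stdlib Require Import Classical FunctionalExtensionality.
Set Implicit Arguments. Unset Strict Implicit. Unset Printing Implicit Defensive.
Import Order.TTheory.
Local Open Scope order_scope.

Lemma famjoin_some (T : Type) (jn : T -> T -> T) m (x : 'I_m -> T) (k : 'I_m) :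
  exists v, famjoin jn x = Some v.
Proof. by case: m x k => [|m] x [] //; rewrite /famjoin enum_ordSl /=; eexists. Qed.

Lemma is_breadth_irredundant_family (T : Type) (jn : T -> T -> T) n :
  is_breadth jn n.+2 ->
  exists a : 'I_n.+2 -> T, forall j, famjoin jn (a \o lift j) <> famjoin jn a.
Proof.
case=> _ [brn minn].
have [m [z [nm zirr]]] : exists m (z : 'I_m -> T), (n.+1 <= m)%N /\
    forall f : 'I_n.+1 -> 'I_m, injective f -> famjoin jn (z \o f) <> famjoin jn z.
  apply: NNPP => nz; have /negP[] := ltnn n.+1; apply: minn => // m z nm.
  apply: NNPP => nf; apply: nz; exists m, z; split => // f f_inj fE.
  by apply: nf; exists f.
have {}nm : (n.+2 <= m)%N.
  by move: nm; rewrite leq_eqVlt => /orP[/eqP mn | //]; subst m; case: (zirr id).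
have [g [g_inj gE]] := brn m z nm.
exists (z \o g) => j zgE; apply: (zirr (g \o lift j)).
  exact: inj_comp g_inj (@lift_inj _ j).
by rewrite -gE -zgE.
Qed.

Lemma card_bigcup_le (I T : finType) (S : I -> {set T}) :
  (#|\bigcup_i S i| <= \sum_i #|S i|)%N.
Proof.
elim/big_rec2: _ => [|i n U _ leUn]; first by rewrite cards0.
by rewrite (leq_trans (leq_card_setU _ _).1) ?leq_add2l.
Qed.

Lemma inj_codom_superset (T : finType) (U : {set T}) n :
  (#|U| <= n <= #|T|)%N -> exists2 f : 'I_n -> T, injective f & {subset U <= codom f}.
Proof.
case/andP=> Un nT; set s := take n (enum U ++ enum (~: U)).
have /eqP size_s : size s = n.
  by rewrite size_takel // size_cat -!cardE cardsC.
have uniq_s : uniq s.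
  rewrite take_uniq // cat_uniq !enum_uniq andbT /=.
  by apply/hasPn => x; rewrite !mem_enum inE.
exists (tnth (Tuple size_s)); first exact/tuple_uniqP.
move=> x xU; rewrite codomE map_tnth_enum /= /s take_cat.
by rewrite ltnNge -cardE Un /= mem_cat mem_enum xU.
Qed.

Section LatticeJoin.
Variables (d : Order.disp_t) (T : latticeType d).
Local Notation famjoin := (famjoin (@Order.join d T)).

Lemma foldl_join_le (y : T) s u :
  (foldl Order.join y s <= u) = (y <= u) && all (<= u) s.
Proof. by elim: s y => [|z s IH] y /=; rewrite ?andbT // IH leUx andbA. Qed.

Lemma famjoin_le m (x : 'I_m -> T) v u :
  famjoin x = Some v -> (v <= u) = [forall k, x k <= u].
Proof.
have -> : [forall k, x k <= u] = all (<= u) (map x (enum 'I_m)).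
  rewrite all_map; apply/forallP/allP => [xu k _ | xu k]; first exact: xu.
  by apply: xu; rewrite mem_enum.
by rewrite /famjoin; case: map => //= y s [<-]; rewrite foldl_join_le.
Qed.

Lemma famjoin_ub m (x : 'I_m -> T) v k : famjoin x = Some v -> x k <= v.
Proof. by move/famjoin_le=> /(_ v); rewrite lexx => /esym/forallP. Qed.

Lemma famjoin_cut m k (x : 'I_m -> T) (f : 'I_k -> 'I_m) u q :
  (forall p, x (f p) <= u) -> ~~ (x q <= u) -> famjoin (x \o f) <> famjoin x.
Proof.
move=> xfu xqu fE; have [w xw] := famjoin_some Order.join x q.
rewrite xw in fE; move: xqu; rewrite (le_trans (famjoin_ub q xw)) //.
by rewrite (famjoin_le _ fE); apply/forallP.
Qed.

Lemma famjoin_lift_ub n (a : 'I_n.+1 -> T) i v k :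
  famjoin (a \o lift i) = Some v -> k != i -> a k <= v.
Proof.
by move=> av; rewrite eq_sym => /unlift_some[k' -> _]; apply: (famjoin_ub _ av).
Qed.

Lemma famjoin_lift_le n (a : 'I_n.+1 -> T) i v :
  famjoin (a \o lift i) = Some v -> a i <= v -> famjoin a = Some v.
Proof.
move=> av aiv; have [w aw] := famjoin_some Order.join a i.
rewrite aw; congr Some; apply: le_anti; rewrite (famjoin_le _ av) (famjoin_le _ aw).
apply/andP; split; apply/forallP => k /=; last exact: (famjoin_ub _ aw).
by case: (eqVneq k i) => [->|ki] //; apply: famjoin_lift_ub av ki.
Qed.

(* Indices are plain naturals (only those below [n] matter), so that the
   systems of the factors of a product can be indexed by the pairs [(i, j)]
   with [j < b i] without dependent casts. *)
Definition irredundant_system n (a r : nat -> T) (c : T) : Prop :=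
  forall j j', (j < n)%N -> (j' < n)%N -> c <= r j /\ (a j' <= r j) = (j' != j).

Lemma irredundant_system_of_neq (x y : T) :
  x <> y -> exists a r c, irredundant_system 1 a r c.
Proof.
move=> xy; pose u := if x `|` y <= x then y else x.
have xyu : ~~ (x `|` y <= u).
  rewrite /u; case: ifP => [|xyx]; last by rewrite xyx.
  rewrite !leUx !lexx andbT /= => yx; apply/negP => xy'; apply: xy.
  by apply/le_anti; rewrite xy' yx.
exists (fun _ => x `|` y), (fun _ => u), u => -[|j] [|j'] //= _ _.
by rewrite (negbTE xyu).
Qed.

Lemma irredundant_system_of_join n (a : 'I_n.+2 -> T) :
  (forall j, famjoin (a \o lift j) <> famjoin a) ->
  exists A R c, irredundant_system n.+2 A R c.
Proof.
move=> airr.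
have [r ar] := fin_all_exists (fun j => famjoin_some Order.join (a \o lift j) ord0).
have ar_le i i' : (a i' <= r i) = (i' != i).
  case: eqVneq => [-> | i'i]; last exact: famjoin_lift_ub (ar i) i'i.
  by apply/negP => /(famjoin_lift_le (ar i)); rewrite -ar => /esym/airr.
exists (fun j => a (inord j)), (fun j => r (inord j)), (a ord0 `&` a ord_max).
move=> j j' jn j'n; rewrite ar_le -(inj_eq val_inj) /= !inordK //; split => //.
by apply: leIx2; rewrite !ar_le; case: eqVneq => // <-.
Qed.

Lemma is_breadth_irredundant_system n :
  is_breadth (@Order.join d T) n -> (exists x y : T, x <> y) ->
  exists a r c, irredundant_system n a r c.
Proof.
case: n => [[] //|[|n]] brn [x [y xy]]; first exact: irredundant_system_of_neq xy.
by have [a /irredundant_system_of_join] := is_breadth_irredundant_family brn.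
Qed.

Definition join_spanning m (x : 'I_m -> T) (S : {set 'I_m}) : Prop :=
  forall u, {in S, forall k, x k <= u} -> forall k, x k <= u.

Lemma breadth_le_spanning n m (x : 'I_m -> T) :
  breadth_le (@Order.join d T) n -> (n <= m)%N ->
  exists2 S : {set 'I_m}, (#|S| <= n)%N & join_spanning x S.
Proof.
move=> brn nm; have [f [_ fE]] := brn m x nm.
exists [set f p | p : 'I_n]; first by rewrite (leq_trans (leq_imset_card _ _)) ?card_ord.
move=> u xSu k; have [w xw] := famjoin_some Order.join x k.
have xfw : famjoin (x \o f) = Some w by rewrite fE.
apply: le_trans (famjoin_ub _ xw) _.
by rewrite (famjoin_le _ xfw); apply/forallP => p; apply: xSu; rewrite imset_f.
Qed.

Lemma famjoin_spanning m k (x : 'I_m -> T) (S : {set 'I_m}) (g : 'I_k -> 'I_m) :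
  (0 < k)%N -> join_spanning x S -> {subset S <= codom g} ->
  famjoin (x \o g) = famjoin x.
Proof.
move=> k_gt0 xS Sg; have [v xgv] := famjoin_some Order.join (x \o g) (Ordinal k_gt0).
have [w xw] := famjoin_some Order.join x (g (Ordinal k_gt0)).
rewrite xgv xw; congr Some; apply: le_anti; apply/andP; split.
  by rewrite (famjoin_le _ xgv); apply/forallP => p; apply: famjoin_ub xw.
rewrite (famjoin_le _ xw); apply/forallP; apply: xS => _ /Sg/codomP[p ->].
exact: (famjoin_ub _ xgv).
Qed.

End LatticeJoin.

Lemma tagnat_eq n (p_ : 'I_n -> nat) (s s' : 'I_(\sum_i p_ i)) :
  (s == s') =
  (tagnat.sig1 s == tagnat.sig1 s') && (tagnat.sig2 s == tagnat.sig2 s' :> nat).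
Proof. by rewrite -val_eqE -{1}(tagnat.sig2K s) -{1}(tagnat.sig2K s') tagnat.eq_Rank. Qed.

Section ProductJoin.
Variables (t : nat) (d : 'I_t -> Order.disp_t) (L : forall i, latticeType (d i)).
Local Notation prod_join := (@prod_join t d L).

Lemma famjoin_prod m (x : 'I_m -> forall i, L i) i :
  famjoin Order.join (fun k => x k i) = omap (fun v => v i) (famjoin prod_join x).
Proof.
rewrite /famjoin (map_comp (fun v => v i) x); case: (map x _) => //= y s; congr Some.
by elim: s y => //= z s IH y; apply: IH.
Qed.

Lemma famjoin_prod_ext m m' (x : 'I_m -> forall i, L i) (y : 'I_m' -> forall i, L i)
    (k : 'I_m) (k' : 'I_m') :
  (forall i, famjoin Order.join (fun p => x p i) = famjoin Order.join (fun p => y p i)) ->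
  famjoin prod_join x = famjoin prod_join y.
Proof.
move=> xy; have [v xv] := famjoin_some prod_join x k.
have [w yw] := famjoin_some prod_join y k'.
rewrite xv yw; congr Some; apply: functional_extensionality_dep => i.
by have := xy i; rewrite !famjoin_prod xv yw => -[].
Qed.

Lemma prod_breadth_le (b : 'I_t -> nat) :
  (0 < \sum_i b i)%N -> (forall i, breadth_le (@Order.join _ (L i)) (b i)) ->
  breadth_le prod_join (\sum_i b i).
Proof.
set B := (\sum_i b i) => B_gt0 brb m x Bm.
have span i : exists2 S : {set 'I_m}, (#|S| <= b i)%N & join_spanning (fun k => x k i) S.
  apply: breadth_le_spanning => //; apply: leq_trans Bm.
  by rewrite /B (bigD1 i) //= leq_addr.
have [S Sb Sspan] := fin_all_exists2 span.
have [f f_inj Sf] :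
    exists2 f : 'I_B -> 'I_m, injective f & {subset \bigcup_i S i <= codom f}.
  apply: inj_codom_superset; rewrite card_ord Bm andbT.
  by rewrite (leq_trans (card_bigcup_le _)) // leq_sum.
exists f; split => //.
apply: famjoin_prod_ext (Ordinal B_gt0) (f (Ordinal B_gt0)) _ => i.
apply: (famjoin_spanning B_gt0 (Sspan i)) => k Sk; apply: Sf.
by apply/bigcupP; exists i.
Qed.

Lemma prod_breadth_ge (b : 'I_t -> nat) (a r : forall i, nat -> L i)
    (c : forall i, L i) k :
  (forall i, irredundant_system (b i) (a i) (r i) (c i)) ->
  breadth_le prod_join k -> (\sum_i b i <= k)%N.
Proof.
set B := (\sum_i b i) => irr brk; rewrite leqNgt; apply/negP => kB.
pose x (s : 'I_B) l := if tagnat.sig1 s == l then a l (tagnat.sig2 s) else c l.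
have [f [f_inj fE]] := brk B x (ltnW kB).
have /subsetPn[q _ qf] : ~~ ([set: 'I_B] \subset codom f).
  apply: contraTN kB => /subset_leq_card.
  by rewrite cardsT card_codom // !card_ord -leqNgt.
pose i := tagnat.sig1 q; pose j := tagnat.sig2 q.
have irr_j := irr i j j (ltn_ord j) (ltn_ord j).
apply: (@famjoin_cut _ _ _ _ (fun s => x s i) f (r i j) q).
- move=> p; rewrite /x; case: eqP => [fpi | _]; last exact: irr_j.1.
  have fpb : (tagnat.sig2 (f p) < b i)%N by rewrite -fpi.
  rewrite (irr i j _ (ltn_ord j) fpb).2; apply: contraNneq qf => fpj.
  have /eqP <- : f p == q by rewrite tagnat_eq fpj fpi !eqxx.
  exact: codom_f.
- by rewrite /x eqxx irr_j.2 eqxx.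
- by move: (congr1 (omap (fun v => v i)) fE); rewrite -!famjoin_prod.
Qed.

End ProductJoin.

Theorem lemma2p2 (t : nat) (d : 'I_t -> Order.disp_t)
  (L : forall i : 'I_t, latticeType (d i)) (b : 'I_t -> nat) :
  (2 <= t)%N ->
  (forall i : 'I_t, exists x y : L i, x <> y) ->
  (forall i : 'I_t, is_breadth (@Order.join (d i) (L i)) (b i)) ->
  is_breadth (@prod_join t d L) (\sum_(i < t) b i).
Proof.
move=> t_ge2 nontrivial brb.
have sum_gt0 : (0 < \sum_(i < t) b i)%N.
  by rewrite (bigD1 (Ordinal (ltnW t_ge2))) // ltn_addr ?(brb _).1.
have /fin_all_exists[a /fin_all_exists[r /fin_all_exists[c irr]]] i :=
  is_breadth_irredundant_system (brb i) (nontrivial i).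
split=> //; split; last by move=> k _; apply: prod_breadth_ge irr.
by apply: prod_breadth_le => // i; case: (brb i) => _ [].
Qed.
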